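(* Let $k>0$ and consider the system of ODEs, for $r>0$, $\theta$, $z$, $p_R$, $p_S$ real, \[ \dot r = p_R,\quad \dot\theta = \frac{p_S}{r^2},\quad \dot z = \frac{p_S}{2},\quad \dot p_R = \frac{p_S^2}{r^3} - \frac{2kr^3}{(r^4+16z^2)^{3/2}},\quad \dot p_S = -\frac{8kr^2 z}{(r^4+16z^2)^{3/2}}. \] This system does not admit any (non-constant) first integral that is linear in the momenta, i.e. of the form $F = f(r,\theta,z)\,p_R + g(r,\theta,z)\,p_S + h(r,\theta,z)$ with smooth coefficients.
   Context: A first integral is a function of $(r,\theta,z,p_R,p_S)$ constant along all solutions. The system describes nonholonomic motion on the Heisenberg group in the potential $-k/\sqrt{r^4+16z^2}$ in cylindrical coordinates. *)

From Stdlib Require Import Reals.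
From Coquelicot Require Import Coquelicot.
Open Scope R_scope.

Definition cont3_at (f : R -> R -> R -> R) (r th z : R) : Prop :=
  forall eps : R, 0 < eps -> exists delta : R, 0 < delta /\
    forall r' th' z' : R, 0 < r' ->
      Rabs (r' - r) < delta -> Rabs (th' - th) < delta -> Rabs (z' - z) < delta ->
      Rabs (f r' th' z' - f r th z) < eps.

Fixpoint Ck (n : nat) (f : R -> R -> R -> R) : Prop :=
  match n with
  | O => forall r th z, 0 < r -> cont3_at f r th z
  | S m =>
      (forall r th z, 0 < r -> cont3_at f r th z) /\
      (forall r th z, 0 < r ->
         ex_derive (fun x => f x th z) r /\
         ex_derive (fun x => f r x z) th /\
         ex_derive (fun x => f r th x) z) /\
      Ck m (fun r th z => Derive (fun x => f x th z) r) /\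
      Ck m (fun r th z => Derive (fun x => f r x z) th) /\
      Ck m (fun r th z => Derive (fun x => f r th x) z)
  end.

Definition smooth3 (f : R -> R -> R -> R) : Prop := forall n, Ck n f.

Definition Dpow (r z : R) : R := (r ^ 4 + 16 * z ^ 2) * sqrt (r ^ 4 + 16 * z ^ 2).

Definition is_solution (k a b : R) (r th z pR pS : R -> R) : Prop :=
  a < b /\
  forall t, a < t < b ->
    0 < r t /\
    is_derive r t (pR t) /\
    is_derive th t (pS t / (r t) ^ 2) /\
    is_derive z t (pS t / 2) /\
    is_derive pR t ((pS t) ^ 2 / (r t) ^ 3 - 2 * k * (r t) ^ 3 / Dpow (r t) (z t)) /\
    is_derive pS t (- (8 * k * (r t) ^ 2 * z t) / Dpow (r t) (z t)).

Definition first_integral (k : R) (F : R -> R -> R -> R -> R -> R) : Prop :=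
  forall a b (r th z pR pS : R -> R), is_solution k a b r th z pR pS ->
    forall t1 t2, a < t1 < b -> a < t2 < b ->
      F (r t1) (th t1) (z t1) (pR t1) (pS t1) = F (r t2) (th t2) (z t2) (pR t2) (pS t2).

From Stdlib Require Import Reals Lra Lia.
From Coquelicot Require Import Coquelicot.
Open Scope R_scope.

(* A linear first integral F = f p_R + g p_S + h is constant along the solution through any
   phase-space point; such solutions exist by Picard's theorem applied to the vector field clamped
   to a box around the point.  Differentiating F along that solution at t = 0 with the chain rule
   gives a quadratic polynomial in (p_R, p_S) that vanishes identically, so its six coefficients
   vanish.  Hence f and h do not depend on r, r f + 4 z g = 0, and the p_S^2 coefficient becomes,
   after substituting g = - r f / (4 z) and multiplying by r^3, a polynomial in r whose constant
   term is f; so f = 0, then g = 0 (by continuity across z = 0), and h is constant. *)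

Lemma ball_Rabs (x y e : R) : ball x e y <-> Rabs (y - x) < e.
Proof. reflexivity. Qed.

Lemma continuous_eps_delta (f : R -> R) t :
  continuous f t <->
  forall e, 0 < e -> exists d, 0 < d /\ forall s, Rabs (s - t) < d -> Rabs (f s - f t) < e.
Proof.
  unfold continuous. rewrite <- continuity_pt_filterlim, continuity_pt_locally. split.
  - intros H e He. destruct (H (mkposreal e He)) as [d Hd].
    exists d. split; [apply cond_pos | intros s Hs; apply Hd, ball_Rabs, Hs].
  - intros H eps. destruct (H eps (cond_pos eps)) as [d [Hd H']].
    exists (mkposreal d Hd). intros y Hy. apply H', ball_Rabs, Hy.
Qed.

Lemma is_derive_continuous (f : R -> R) t l : is_derive f t l -> continuous f t.
Proof. intros H. apply (ex_derive_continuous (K := R_AbsRing) (V := R_NormedModule)). exists l. exact H. Qed.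

Lemma continuous_components_uniform (phi : R -> nat -> R) t N :
  (forall j, (j < N)%nat -> continuous (fun s => phi s j) t) ->
  forall e, 0 < e -> exists d, 0 < d /\ forall s, Rabs (s - t) < d ->
     forall j, (j < N)%nat -> Rabs (phi s j - phi t j) < e.
Proof.
  induction N as [|N IH]; intros Hc e He.
  - exists 1. split; [lra | intros s _ j Hj; lia].
  - destruct (IH (fun j Hj => Hc j ltac:(lia)) e He) as [d1 [Hd1 H1]].
    destruct (proj1 (continuous_eps_delta _ _) (Hc N ltac:(lia)) e He) as [d2 [Hd2 H2]].
    exists (Rmin d1 d2). split; [apply Rmin_pos; lra |].
    intros s Hs j Hj. pose proof (Rmin_l d1 d2). pose proof (Rmin_r d1 d2).
    destruct (Nat.eq_dec j N) as [->|Hne]; [apply H2; lra | apply H1; [lra | lia]].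
Qed.

Lemma abs_RInt_le_const_abs (f : R -> R) a b B : ex_RInt f a b ->
  (forall s, Rmin a b <= s <= Rmax a b -> Rabs (f s) <= B) ->
  Rabs (RInt f a b) <= Rabs (b - a) * B.
Proof.
  intros Hex Hb. apply (norm_RInt_le_const_abs f a b); [exact Hb |].
  apply (RInt_correct (V := R_CompleteNormedModule)), Hex.
Qed.

Lemma RInt_sub (f g : R -> R) a b : ex_RInt f a b -> ex_RInt g a b ->
  RInt f a b - RInt g a b = RInt (fun s => f s - g s) a b.
Proof. intros Hf Hg. symmetry. exact (RInt_minus (V := R_CompleteNormedModule) f g a b Hf Hg). Qed.

Lemma le_0_of_le_geometric a C q : 0 <= q < 1 -> (forall m, a <= C * q ^ m) -> a <= 0.
Proof.
  intros Hq H.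
  assert (Hl : is_lim_seq (fun m => C * q ^ m) (C * 0)).
  { apply (is_lim_seq_scal_l _ C 0), is_lim_seq_geom. rewrite Rabs_right; lra. }
  pose proof (is_lim_seq_le _ _ a (C * 0) H (is_lim_seq_const a) Hl) as Hle.
  simpl in Hle. lra.
Qed.

Lemma is_lim_seq_dist_le (u v : nat -> R) (l l' B : R) : is_lim_seq u l -> is_lim_seq v l' ->
  (forall m, Rabs (u m - v m) <= B) -> Rabs (l - l') <= B.
Proof.
  intros Hu Hv Hb.
  assert (Hl : is_lim_seq (fun m => Rabs (u m - v m)) (Rabs (l - l'))).
  { apply (is_lim_seq_abs _ (l - l')), (is_lim_seq_minus _ _ l l'); auto. reflexivity. }
  exact (is_lim_seq_le _ (fun _ => B) _ B Hb Hl (is_lim_seq_const B)).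
Qed.

Lemma is_derive_const_add_RInt (f : R -> R) c t : (forall s, continuous f s) ->
  is_derive (fun s => c + RInt f 0 s) t (f t).
Proof.
  intros Hc.
  assert (Hd : is_derive (fun s => RInt f 0 s) t (f t)).
  { apply is_derive_RInt with (a := 0); [| apply Hc].
    exists (mkposreal 1 Rlt_0_1). intros y _.
    apply RInt_correct, ex_RInt_continuous. intros z _. apply Hc. }
  pose proof (is_derive_plus _ _ t 0 (f t) (is_derive_const c t) Hd) as H.
  unfold plus, zero in H; simpl in H. rewrite Rplus_0_l in H. exact H.
Qed.

Definition vclose (n : nat) (e : R) (v w : nat -> R) : Prop :=
  forall j, (j < n)%nat -> Rabs (v j - w j) <= e.

Lemma vclose_nonneg n e v w : (0 < n)%nat -> vclose n e v w -> 0 <= e.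
Proof. intros Hn H. eapply Rle_trans; [apply Rabs_pos | apply (H 0%nat Hn)]. Qed.

Section Picard.

Variables (n : nat) (G : (nat -> R) -> nat -> R) (M L : R) (y0 : nat -> R).
Hypothesis M_pos : 0 < M.
Hypothesis L_pos : 0 < L.
Hypothesis G_bounded : forall v i, (i < n)%nat -> Rabs (G v i) <= M.
Hypothesis G_lipschitz :
  forall v w e, vclose n e v w -> forall i, (i < n)%nat -> Rabs (G v i - G w i) <= L * e.

Fixpoint picard_iter (m : nat) (t : R) : nat -> R :=
  match m with
  | O => y0
  | S m => fun i => y0 i + RInt (fun s => G (picard_iter m s) i) 0 t
  end.

Definition picard_limit (t : R) (i : nat) : R := real (Lim_seq (fun m => picard_iter m t i)).

Lemma G_continuous_along (phi : R -> nat -> R) t :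
  (forall j, (j < n)%nat -> continuous (fun s => phi s j) t) ->
  forall i, (i < n)%nat -> continuous (fun s => G (phi s) i) t.
Proof.
  intros Hc i Hi. apply continuous_eps_delta. intros e He.
  destruct (continuous_components_uniform phi t n Hc (e / (2 * L))) as [d [Hd Hd']].
  { apply Rdiv_lt_0_compat; lra. }
  exists d. split; [exact Hd |]. intros s Hs.
  eapply Rle_lt_trans; [apply (G_lipschitz _ _ (e / (2 * L))); [| exact Hi] |].
  - intros j Hj. left. apply Hd'; auto.
  - replace (L * (e / (2 * L))) with (e / 2) by (field; lra). lra.
Qed.

Lemma picard_iter_continuous m i t : (i < n)%nat -> continuous (fun s => picard_iter m s i) t.
Proof.
  revert i t. induction m as [|m IH]; intros i t Hi; simpl.
  - apply continuous_const.
  - apply (is_derive_continuous _ _ (G (picard_iter m t) i)), is_derive_const_add_RInt.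
    intros s. apply G_continuous_along; auto.
Qed.

Lemma picard_iter_ex_RInt m i a b : (i < n)%nat ->
  ex_RInt (fun s => G (picard_iter m s) i) a b.
Proof.
  intros Hi. apply (ex_RInt_continuous (V := R_CompleteNormedModule)). intros z _.
  apply G_continuous_along; auto. intros j Hj. apply picard_iter_continuous, Hj.
Qed.

Lemma picard_iter_lipschitz m i t t' : (i < n)%nat ->
  Rabs (picard_iter m t i - picard_iter m t' i) <= M * Rabs (t - t').
Proof.
  intros Hi. destruct m as [|m]; simpl.
  - rewrite Rminus_diag, Rabs_R0. apply Rmult_le_pos; [lra | apply Rabs_pos].
  - set (f := fun s => G (picard_iter m s) i).
    assert (Hc : RInt f 0 t' + RInt f t' t = RInt f 0 t)
      by (apply (RInt_Chasles f); apply picard_iter_ex_RInt, Hi).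
    rewrite <- Hc, Rminus_plus_l_l, Rplus_minus_l.
    rewrite Rmult_comm. apply abs_RInt_le_const_abs; [apply picard_iter_ex_RInt, Hi |].
    intros s _. apply G_bounded, Hi.
Qed.

Section Contraction.

Variable d : R.
Hypothesis d_pos : 0 < d.
Hypothesis Ld_le_half : L * d <= / 2.

Let Ld_nonneg : 0 <= L * d.
Proof. nra. Qed.

Lemma bound_on_segment s t : Rabs t <= d -> Rmin 0 t <= s <= Rmax 0 t -> Rabs s <= d.
Proof.
  intros Ht Hs. apply Rabs_le. apply Rabs_le_between in Ht.
  destruct (Rle_dec 0 t).
  - rewrite Rmin_left, Rmax_right in Hs by lra. lra.
  - rewrite Rmin_right, Rmax_left in Hs by lra. lra.
Qed.

Lemma picard_iter_step m t : Rabs t <= d -> forall i, (i < n)%nat ->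
  Rabs (picard_iter (S m) t i - picard_iter m t i) <= M * d * (L * d) ^ m.
Proof.
  revert t. induction m as [|m IH]; intros t Ht i Hi.
  - simpl. rewrite Rplus_minus_l.
    eapply Rle_trans;
      [apply abs_RInt_le_const_abs; [apply ex_RInt_const | intros s _; apply G_bounded, Hi] |].
    rewrite Rminus_0_r. nra.
  - change (picard_iter (S (S m)) t i) with (y0 i + RInt (fun s => G (picard_iter (S m) s) i) 0 t).
    change (picard_iter (S m) t i) with (y0 i + RInt (fun s => G (picard_iter m s) i) 0 t).
    rewrite Rminus_plus_l_l, RInt_sub by apply picard_iter_ex_RInt, Hi.
    eapply Rle_trans.
    + apply (abs_RInt_le_const_abs _ _ _ (L * (M * d * (L * d) ^ m))).
      { apply (ex_RInt_minus (V := R_NormedModule)); apply picard_iter_ex_RInt, Hi. }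
      intros s Hs. apply G_lipschitz; [| exact Hi].
      intros j Hj. apply IH; [apply (bound_on_segment s t Ht Hs) | exact Hj].
    + rewrite Rminus_0_r. simpl.
      assert (0 <= (L * d) ^ m) by (apply pow_le; lra).
      replace (M * d * (L * d * (L * d) ^ m)) with (d * (L * (M * d * (L * d) ^ m))) by ring.
      apply Rmult_le_compat_r; [| lra]. apply Rmult_le_pos; [lra |]. apply Rmult_le_pos; nra.
Qed.

Lemma picard_iter_cauchy m p t : Rabs t <= d -> forall i, (i < n)%nat ->
  Rabs (picard_iter (p + m) t i - picard_iter p t i)
    <= 2 * M * d * ((L * d) ^ p - (L * d) ^ (p + m)).
Proof.
  intros Ht i Hi. induction m as [|m IH].
  - rewrite Nat.add_0_r, !Rminus_diag, Rabs_R0. lra.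
  - replace (p + S m)%nat with (S (p + m)) by lia.
    pose proof (picard_iter_step (p + m) t Ht i Hi) as H1.
    replace (picard_iter (S (p + m)) t i - picard_iter p t i) with
      ((picard_iter (S (p + m)) t i - picard_iter (p + m) t i)
       + (picard_iter (p + m) t i - picard_iter p t i)) by ring.
    eapply Rle_trans; [apply Rabs_triang |].
    assert (0 <= (L * d) ^ (p + m)) by (apply pow_le; lra).
    replace ((L * d) ^ S (p + m)) with (L * d * (L * d) ^ (p + m)) by reflexivity.
    assert (0 <= M * d * (L * d) ^ (p + m) * (1 - 2 * L * d))
      by (apply Rmult_le_pos; [apply Rmult_le_pos; nra | lra]).
    lra.
Qed.

Lemma picard_limit_is_lim t i : Rabs t <= d -> (i < n)%nat ->
  is_lim_seq (fun m => picard_iter m t i) (picard_limit t i).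
Proof.
  intros Ht Hi.
  assert (Hex : ex_finite_lim_seq (fun m => picard_iter m t i)).
  { apply ex_lim_seq_cauchy_corr. intros eps.
    destruct (pow_lt_1_zero (L * d) ltac:(rewrite Rabs_right; lra) (eps / (4 * M * d + 1)))
      as [N HN].
    { apply Rdiv_lt_0_compat; [apply cond_pos | nra]. }
    exists N. intros p p' Hp Hp'.
    pose proof (picard_iter_cauchy (p - N) N t Ht i Hi) as H1.
    pose proof (picard_iter_cauchy (p' - N) N t Ht i Hi) as H2.
    replace (N + (p - N))%nat with p in H1 by lia.
    replace (N + (p' - N))%nat with p' in H2 by lia.
    pose proof (HN N (le_n N)) as H3. rewrite Rabs_right in H3 by (apply Rle_ge, pow_le; lra).
    assert (0 <= (L * d) ^ p) by (apply pow_le; lra).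
    assert (0 <= (L * d) ^ p') by (apply pow_le; lra).
    assert (0 <= (L * d) ^ N) by (apply pow_le; lra).
    assert (Hsmall : (L * d) ^ N * (4 * M * d + 1) < eps).
    { pose proof (cond_pos eps).
      apply Rmult_lt_compat_r with (r := 4 * M * d + 1) in H3; [| nra].
      replace (eps / (4 * M * d + 1) * (4 * M * d + 1)) with (pos eps) in H3 by (field; nra).
      exact H3. }
    replace (picard_iter p t i - picard_iter p' t i) with
      ((picard_iter p t i - picard_iter N t i) - (picard_iter p' t i - picard_iter N t i)) by ring.
    eapply Rle_lt_trans; [apply Rabs_triang |]. rewrite Rabs_Ropp.
    assert (0 <= M * d * (L * d) ^ p) by (apply Rmult_le_pos; nra).
    assert (0 <= M * d * (L * d) ^ p') by (apply Rmult_le_pos; nra).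
    lra. }
  destruct Hex as [l Hl]. unfold picard_limit. rewrite (is_lim_seq_unique _ _ Hl). exact Hl.
Qed.

Lemma picard_limit_close m t i : Rabs t <= d -> (i < n)%nat ->
  Rabs (picard_limit t i - picard_iter m t i) <= 2 * M * d * (L * d) ^ m.
Proof.
  intros Ht Hi.
  pose proof (proj1 (is_lim_seq_incr_n _ m _) (picard_limit_is_lim t i Ht Hi)) as Hl.
  apply (is_lim_seq_dist_le _ _ _ _ _ Hl (is_lim_seq_const _)).
  intros p. rewrite Nat.add_comm.
  eapply Rle_trans; [apply (picard_iter_cauchy p m t Ht i Hi) |].
  assert (0 <= M * d * (L * d) ^ (m + p)) by (apply Rmult_le_pos; [nra | apply pow_le; lra]).
  lra.
Qed.

Lemma picard_limit_lipschitz t t' i : Rabs t <= d -> Rabs t' <= d -> (i < n)%nat ->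
  Rabs (picard_limit t i - picard_limit t' i) <= M * Rabs (t - t').
Proof.
  intros Ht Ht' Hi.
  apply (is_lim_seq_dist_le _ _ _ _ _ (picard_limit_is_lim t i Ht Hi) (picard_limit_is_lim t' i Ht' Hi)).
  intros m. apply picard_iter_lipschitz, Hi.
Qed.

Lemma picard_limit_init t i : Rabs t <= d -> (i < n)%nat ->
  Rabs (picard_limit t i - y0 i) <= M * Rabs t.
Proof.
  intros Ht Hi.
  apply (is_lim_seq_dist_le _ _ _ _ _ (picard_limit_is_lim t i Ht Hi) (is_lim_seq_const _)).
  intros m. replace (y0 i) with (picard_iter m 0 i)
    by (destruct m; simpl; [| rewrite RInt_point]; reflexivity || (unfold zero; simpl; ring)).
  rewrite <- (Rminus_0_r t) at 2. apply picard_iter_lipschitz, Hi.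
Qed.

Lemma picard_limit_continuous t i : Rabs t < d -> (i < n)%nat ->
  continuous (fun s => picard_limit s i) t.
Proof.
  intros Ht Hi. apply continuous_eps_delta. intros e He.
  exists (Rmin (d - Rabs t) (e / (2 * M))). split.
  { apply Rmin_pos; [lra | apply Rdiv_lt_0_compat; lra]. }
  intros s Hs.
  pose proof (Rmin_l (d - Rabs t) (e / (2 * M))). pose proof (Rmin_r (d - Rabs t) (e / (2 * M))).
  assert (Hs' : Rabs s <= d) by (pose proof (Rabs_triang_inv s t); lra).
  eapply Rle_lt_trans; [apply (picard_limit_lipschitz s t i Hs' ltac:(lra) Hi) |].
  apply Rle_lt_trans with (M * (e / (2 * M))); [apply Rmult_le_compat_l; lra |].
  replace (M * (e / (2 * M))) with (e / 2) by (field; lra). lra.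
Qed.

Lemma picard_limit_ex_RInt t i : Rabs t < d -> (i < n)%nat ->
  ex_RInt (fun s => G (picard_limit s) i) 0 t.
Proof.
  intros Ht Hi. apply (ex_RInt_continuous (V := R_CompleteNormedModule)). intros s Hs.
  apply G_continuous_along; [| exact Hi]. intros j Hj. apply picard_limit_continuous; [| exact Hj].
  apply Rabs_lt_between in Ht. apply Rabs_lt_between.
  destruct (Rle_dec 0 t).
  - rewrite Rmin_left, Rmax_right in Hs by lra. lra.
  - rewrite Rmin_right, Rmax_left in Hs by lra. lra.
Qed.

(* The fixed-point equation is obtained by letting m go to infinity in picard_iter (S m),
   whose distance to both sides is O((L d)^m). *)
Lemma picard_limit_fixed_point t i : Rabs t < d -> (i < n)%nat ->
  picard_limit t i = y0 i + RInt (fun s => G (picard_limit s) i) 0 t.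
Proof.
  intros Ht Hi.
  set (X := y0 i + RInt (fun s => G (picard_limit s) i) 0 t).
  assert (Hb : forall m, Rabs (picard_limit t i - X) <= (4 * M * d * (L * d)) * (L * d) ^ m).
  { intros m.
    pose proof (picard_limit_close (S m) t i ltac:(lra) Hi) as H1.
    assert (H2 : Rabs (picard_iter (S m) t i - X) <= L * (2 * M * d * (L * d) ^ m) * d).
    { unfold X.
      change (picard_iter (S m) t i) with (y0 i + RInt (fun s => G (picard_iter m s) i) 0 t).
      rewrite Rminus_plus_l_l, RInt_sub;
        [| apply picard_iter_ex_RInt, Hi | apply picard_limit_ex_RInt; assumption].
      eapply Rle_trans.
      - apply (abs_RInt_le_const_abs _ _ _ (L * (2 * M * d * (L * d) ^ m))).
        { apply (ex_RInt_minus (V := R_NormedModule));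
            [apply picard_iter_ex_RInt | apply picard_limit_ex_RInt]; assumption. }
        intros s Hs. apply G_lipschitz; [| exact Hi]. intros j Hj.
        rewrite <- Rabs_Ropp, Ropp_minus_distr.
        apply picard_limit_close; [apply (bound_on_segment s t); [lra | exact Hs] | exact Hj].
      - rewrite Rminus_0_r, Rmult_comm. apply Rmult_le_compat_l; [| lra].
        apply Rmult_le_pos; [lra |]. apply Rmult_le_pos; [nra | apply pow_le; lra]. }
    replace (picard_limit t i - X) with
      ((picard_limit t i - picard_iter (S m) t i) + (picard_iter (S m) t i - X)) by ring.
    eapply Rle_trans; [apply Rabs_triang |].
    replace ((L * d) ^ S m) with (L * d * (L * d) ^ m) in H1 by reflexivity. lra. }
  pose proof (le_0_of_le_geometric _ _ (L * d) ltac:(lra) Hb).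
  pose proof (Rabs_pos (picard_limit t i - X)).
  assert (Hz : Rabs (picard_limit t i - X) = 0) by lra.
  apply Rabs_eq_0 in Hz. lra.
Qed.

Lemma picard_limit_is_derive t i : Rabs t < d -> (i < n)%nat ->
  is_derive (fun s => picard_limit s i) t (G (picard_limit t) i).
Proof.
  intros Ht Hi.
  assert (Hp : 0 < d - Rabs t) by lra.
  assert (Hnear : forall s, ball t (d - Rabs t) s -> Rabs s < d).
  { intros s Hs. pose proof (proj1 (ball_Rabs t s _) Hs). pose proof (Rabs_triang_inv s t). lra. }
  apply is_derive_ext_loc with (f := fun s => y0 i + RInt (fun u => G (picard_limit u) i) 0 s).
  { exists (mkposreal _ Hp). intros s Hs. symmetry. apply picard_limit_fixed_point; auto. }
  assert (Hd : is_derive (fun s => RInt (fun u => G (picard_limit u) i) 0 s) t (G (picard_limit t) i)).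
  { apply (is_derive_RInt (fun u => G (picard_limit u) i) _ 0 t).
    - exists (mkposreal _ Hp). intros s Hs.
      apply (RInt_correct (V := R_CompleteNormedModule)), picard_limit_ex_RInt; auto.
    - apply G_continuous_along; [| exact Hi]. intros j Hj. apply picard_limit_continuous; auto. }
  pose proof (is_derive_plus _ _ t 0 _ (is_derive_const (y0 i) t) Hd) as X.
  unfold plus, zero in X; simpl in X. rewrite Rplus_0_l in X. exact X.
Qed.

End Contraction.

Theorem picard_local_existence : exists d, 0 < d /\ exists y : R -> nat -> R,
  forall t, Rabs t < d -> forall i, (i < n)%nat ->
    is_derive (fun s => y s i) t (G (y t) i) /\ Rabs (y t i - y0 i) <= M * Rabs t.
Proof.
  assert (Hd : 0 < / (2 * L)) by (apply Rinv_0_lt_compat; lra).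
  assert (Hq : L * / (2 * L) <= / 2) by (right; field; lra).
  exists (/ (2 * L)). split; [exact Hd |]. exists picard_limit.
  intros t Ht i Hi. split.
  - apply (picard_limit_is_derive (/ (2 * L))); auto.
  - apply (picard_limit_init (/ (2 * L))); auto. lra.
Qed.

End Picard.

Section BoxLipschitz.

Variables (n : nat) (c : nat -> R) (rho : R).
Hypothesis n_pos : (0 < n)%nat.

Definition box_lipschitz (phi : (nat -> R) -> R) : Prop :=
  exists B K, 0 <= K /\
    (forall v, vclose n rho v c -> Rabs (phi v) <= B) /\
    (forall v w e, vclose n rho v c -> vclose n rho w c -> vclose n e v w ->
       Rabs (phi v - phi w) <= K * e).

Lemma box_lipschitz_const a : box_lipschitz (fun _ => a).
Proof.
  exists (Rabs a), 0. split; [lra | split; [intros; lra |]].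
  intros v w e _ _ _. rewrite Rminus_diag, Rabs_R0, Rmult_0_l. lra.
Qed.

Lemma box_lipschitz_coord j : (j < n)%nat -> box_lipschitz (fun v => v j).
Proof.
  intros Hj. exists (Rabs (c j) + rho), 1. split; [lra | split].
  - intros v Hv. pose proof (Hv j Hj). pose proof (Rabs_triang (v j - c j) (c j)).
    replace (v j - c j + c j) with (v j) in * by ring. lra.
  - intros v w e _ _ He. rewrite Rmult_1_l. apply He, Hj.
Qed.

Lemma box_lipschitz_add phi psi :
  box_lipschitz phi -> box_lipschitz psi -> box_lipschitz (fun v => phi v + psi v).
Proof.
  intros [B1 [K1 [HK1 [HB1 HL1]]]] [B2 [K2 [HK2 [HB2 HL2]]]].
  exists (B1 + B2), (K1 + K2). split; [lra | split].
  - intros v Hv. pose proof (Rabs_triang (phi v) (psi v)). pose proof (HB1 v Hv). pose proof (HB2 v Hv). lra.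
  - intros v w e Hv Hw He.
    replace (phi v + psi v - (phi w + psi w)) with ((phi v - phi w) + (psi v - psi w)) by ring.
    pose proof (Rabs_triang (phi v - phi w) (psi v - psi w)).
    pose proof (HL1 v w e Hv Hw He). pose proof (HL2 v w e Hv Hw He). lra.
Qed.

Lemma box_lipschitz_opp phi : box_lipschitz phi -> box_lipschitz (fun v => - phi v).
Proof.
  intros [B [K [HK [HB HL]]]]. exists B, K. split; [exact HK | split].
  - intros v Hv. rewrite Rabs_Ropp. auto.
  - intros v w e Hv Hw He. replace (- phi v - - phi w) with (- (phi v - phi w)) by ring.
    rewrite Rabs_Ropp. auto.
Qed.

Lemma box_lipschitz_sub phi psi :
  box_lipschitz phi -> box_lipschitz psi -> box_lipschitz (fun v => phi v - psi v).
Proof. intros H1 H2. apply (box_lipschitz_add phi (fun v => - psi v) H1), box_lipschitz_opp, H2. Qed.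

Lemma box_lipschitz_mul phi psi :
  box_lipschitz phi -> box_lipschitz psi -> box_lipschitz (fun v => phi v * psi v).
Proof.
  intros [B1 [K1 [HK1 [HB1 HL1]]]] [B2 [K2 [HK2 [HB2 HL2]]]].
  pose proof (Rle_abs B1). pose proof (Rle_abs B2).
  exists (Rabs B1 * Rabs B2), (Rabs B1 * K2 + Rabs B2 * K1). split.
  { pose proof (Rabs_pos B1). pose proof (Rabs_pos B2). nra. } split.
  - intros v Hv. rewrite Rabs_mult. pose proof (HB1 v Hv). pose proof (HB2 v Hv).
    apply Rmult_le_compat; try apply Rabs_pos; lra.
  - intros v w e Hv Hw He.
    replace (phi v * psi v - phi w * psi w) with (phi v * (psi v - psi w) + psi w * (phi v - phi w))
      by ring.
    eapply Rle_trans; [apply Rabs_triang |]. rewrite !Rabs_mult.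
    pose proof (HB1 v Hv). pose proof (HB2 w Hw).
    pose proof (HL1 v w e Hv Hw He). pose proof (HL2 v w e Hv Hw He).
    assert (Rabs (phi v) * Rabs (psi v - psi w) <= Rabs B1 * (K2 * e))
      by (apply Rmult_le_compat; try apply Rabs_pos; lra).
    assert (Rabs (psi w) * Rabs (phi v - phi w) <= Rabs B2 * (K1 * e))
      by (apply Rmult_le_compat; try apply Rabs_pos; lra).
    lra.
Qed.

Lemma box_lipschitz_pow phi m : box_lipschitz phi -> box_lipschitz (fun v => phi v ^ m).
Proof.
  intros H. induction m as [|m IH]; simpl.
  - apply box_lipschitz_const.
  - apply box_lipschitz_mul; auto.
Qed.

Section BoundedBelow.

Variables (phi : (nat -> R) -> R) (a : R).
Hypothesis a_pos : 0 < a.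
Hypothesis phi_ge : forall v, vclose n rho v c -> a <= phi v.

Lemma box_lipschitz_inv : box_lipschitz phi -> box_lipschitz (fun v => / phi v).
Proof.
  intros [B [K [HK [HB HL]]]].
  exists (/ a), (K / (a * a)). split.
  { apply Rmult_le_pos; [lra | left; apply Rinv_0_lt_compat; nra]. } split.
  - intros v Hv. pose proof (phi_ge v Hv).
    rewrite Rabs_right by (left; apply Rinv_0_lt_compat; lra). apply Rinv_le_contravar; lra.
  - intros v w e Hv Hw He. pose proof (phi_ge v Hv). pose proof (phi_ge w Hw).
    replace (/ phi v - / phi w) with ((phi w - phi v) * / (phi v * phi w)) by (field; lra).
    rewrite Rabs_mult, Rabs_minus_sym, (Rabs_right (/ _)) by (left; apply Rinv_0_lt_compat; nra).
    replace (K / (a * a) * e) with ((K * e) * / (a * a)) by (unfold Rdiv; ring).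
    apply Rmult_le_compat; [apply Rabs_pos | left; apply Rinv_0_lt_compat; nra | auto |].
    apply Rinv_le_contravar; [nra | apply Rmult_le_compat; lra].
Qed.

Lemma box_lipschitz_sqrt : box_lipschitz phi -> box_lipschitz (fun v => sqrt (phi v)).
Proof.
  intros [B [K [HK [HB HL]]]].
  pose proof (sqrt_lt_R0 a a_pos) as Hsa.
  exists (sqrt (Rabs B)), (K / sqrt a). split.
  { apply Rmult_le_pos; [lra | left; apply Rinv_0_lt_compat; lra]. } split.
  - intros v Hv. pose proof (phi_ge v Hv). pose proof (HB v Hv) as Hb. pose proof (Rle_abs B).
    rewrite Rabs_right by apply Rle_ge, sqrt_pos.
    apply sqrt_le_1_alt. rewrite Rabs_right in Hb; lra.
  - intros v w e Hv Hw He. pose proof (phi_ge v Hv). pose proof (phi_ge w Hw).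
    assert (Hsv : sqrt a <= sqrt (phi v)) by (apply sqrt_le_1_alt; lra).
    assert (Hsw : sqrt a <= sqrt (phi w)) by (apply sqrt_le_1_alt; lra).
    assert (E : sqrt (phi v) - sqrt (phi w) = (phi v - phi w) * / (sqrt (phi v) + sqrt (phi w))).
    { apply (Rmult_eq_reg_r (sqrt (phi v) + sqrt (phi w))); [| lra].
      rewrite Rmult_assoc, Rinv_l, Rmult_1_r by lra.
      replace ((sqrt (phi v) - sqrt (phi w)) * (sqrt (phi v) + sqrt (phi w)))
        with (sqrt (phi v) * sqrt (phi v) - sqrt (phi w) * sqrt (phi w)) by ring.
      rewrite !sqrt_sqrt by lra. reflexivity. }
    rewrite E, Rabs_mult, (Rabs_right (/ _)) by (left; apply Rinv_0_lt_compat; lra).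
    replace (K / sqrt a * e) with ((K * e) * / sqrt a) by (unfold Rdiv; ring).
    apply Rmult_le_compat; [apply Rabs_pos | left; apply Rinv_0_lt_compat; lra | auto |].
    apply Rinv_le_contravar; lra.
Qed.

End BoundedBelow.

Lemma box_lipschitz_div phi psi a : 0 < a -> (forall v, vclose n rho v c -> a <= psi v) ->
  box_lipschitz phi -> box_lipschitz psi -> box_lipschitz (fun v => phi v / psi v).
Proof.
  intros Ha Hge H1 H2. apply (box_lipschitz_mul phi (fun v => / psi v) H1).
  apply (box_lipschitz_inv psi a Ha Hge H2).
Qed.

Lemma box_lipschitz_uniform (F : (nat -> R) -> nat -> R) N :
  (forall i, (i < N)%nat -> box_lipschitz (fun v => F v i)) ->
  exists B K, 0 < B /\ 0 < K /\ forall i, (i < N)%nat ->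
    (forall v, vclose n rho v c -> Rabs (F v i) <= B) /\
    (forall v w e, vclose n rho v c -> vclose n rho w c -> vclose n e v w ->
       Rabs (F v i - F w i) <= K * e).
Proof.
  induction N as [|N IH]; intros HF.
  - exists 1, 1. split; [lra | split; [lra | intros; lia]].
  - destruct (IH (fun i Hi => HF i ltac:(lia))) as [B [K [HB0 [HK0 Hb]]]].
    destruct (HF N ltac:(lia)) as [B1 [K1 [HK1 [HB1 HL1]]]].
    pose proof (Rle_abs B1). pose proof (Rabs_pos B1).
    exists (B + Rabs B1), (K + K1). split; [lra | split; [lra |]].
    intros i Hi. destruct (Nat.eq_dec i N) as [->|Hne].
    + split; [intros v Hv; pose proof (HB1 v Hv); lra |].
      intros v w e Hv Hw He. pose proof (vclose_nonneg _ _ _ _ n_pos He).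
      pose proof (HL1 v w e Hv Hw He). nra.
    + destruct (Hb i ltac:(lia)) as [Hb1 Hb2].
      split; [intros v Hv; pose proof (Hb1 v Hv); lra |].
      intros v w e Hv Hw He. pose proof (vclose_nonneg _ _ _ _ n_pos He).
      pose proof (Hb2 v w e Hv Hw He). nra.
Qed.

End BoxLipschitz.

Definition clamp (a b x : R) : R := Rmax a (Rmin b x).

Lemma clamp_between a b x : a <= b -> a <= clamp a b x <= b.
Proof. intros H. unfold clamp, Rmax, Rmin. repeat destruct Rle_dec; lra. Qed.

Lemma clamp_id a b x : a <= x <= b -> clamp a b x = x.
Proof. intros H. unfold clamp, Rmax, Rmin. repeat destruct Rle_dec; lra. Qed.

Lemma clamp_1_lipschitz a b x y : a <= b -> Rabs (clamp a b x - clamp a b y) <= Rabs (x - y).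
Proof.
  intros H. unfold clamp, Rmax, Rmin.
  repeat destruct Rle_dec; apply Rabs_le; unfold Rabs; destruct Rcase_abs; lra.
Qed.

Definition box_proj (c : nat -> R) (rho : R) (v : nat -> R) (j : nat) : R :=
  clamp (c j - rho) (c j + rho) (v j).

Lemma box_proj_in_box n c rho v : 0 <= rho -> vclose n rho (box_proj c rho v) c.
Proof.
  intros Hr j Hj. pose proof (clamp_between (c j - rho) (c j + rho) (v j) ltac:(lra)).
  apply Rabs_le. unfold box_proj. lra.
Qed.

Lemma box_proj_id n c rho v : vclose n rho v c -> forall j, (j < n)%nat -> box_proj c rho v j = v j.
Proof.
  intros Hv j Hj. apply clamp_id. pose proof (Hv j Hj) as X. apply Rabs_le_between in X. lra.
Qed.

(* Precomposing with the projection onto the box turns a vector field that is bounded and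
   Lipschitz on the box into a globally bounded and Lipschitz one, to which Picard applies. *)
Lemma box_proj_bounded_lipschitz n c rho (F : (nat -> R) -> nat -> R) :
  (0 < n)%nat -> 0 <= rho -> (forall i, (i < n)%nat -> box_lipschitz n c rho (fun v => F v i)) ->
  exists B K, 0 < B /\ 0 < K /\
    (forall v i, (i < n)%nat -> Rabs (F (box_proj c rho v) i) <= B) /\
    (forall v w e, vclose n e v w -> forall i, (i < n)%nat ->
       Rabs (F (box_proj c rho v) i - F (box_proj c rho w) i) <= K * e).
Proof.
  intros Hn Hr HF.
  destruct (box_lipschitz_uniform n c rho Hn F n HF) as [B [K [HB [HK Hb]]]].
  exists B, K. split; [exact HB | split; [exact HK | split]].
  - intros v i Hi. apply (Hb i Hi), box_proj_in_box, Hr.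
  - intros v w e He i Hi. apply (Hb i Hi); try apply box_proj_in_box, Hr.
    intros j Hj. eapply Rle_trans; [apply clamp_1_lipschitz; lra | apply He, Hj].
Qed.

(* Phase-space points are encoded as v : nat -> R with (v 0, ..., v 4) = (r, theta, z, p_R, p_S). *)
Definition heisenberg_field (k : R) (v : nat -> R) (i : nat) : R :=
  match i with
  | 0%nat => v 3%nat
  | 1%nat => v 4%nat / v 0%nat ^ 2
  | 2%nat => v 4%nat / 2
  | 3%nat => v 4%nat ^ 2 / v 0%nat ^ 3 - 2 * k * v 0%nat ^ 3 / Dpow (v 0%nat) (v 2%nat)
  | 4%nat => - (8 * k * v 0%nat ^ 2 * v 2%nat) / Dpow (v 0%nat) (v 2%nat)
  | _ => 0
  end.

Lemma Dpow_pos r z : 0 < r -> 0 < Dpow r z.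
Proof.
  intros Hr. unfold Dpow.
  assert (0 < r ^ 4 + 16 * z ^ 2) by (pose proof (pow_lt r 4 Hr); pose proof (pow2_ge_0 z); lra).
  apply Rmult_lt_0_compat; [assumption | apply sqrt_lt_R0; assumption].
Qed.

Section HeisenbergFieldOnBox.

Variables (c : nat -> R) (rho : R).
Hypothesis rho_pos : 0 < rho.
Hypothesis box_r_ge : forall v, vclose 5 rho v c -> rho <= v 0%nat.

Lemma box_r_pow_ge m v : vclose 5 rho v c -> rho ^ m <= v 0%nat ^ m.
Proof. intros Hv. apply pow_incr. pose proof (box_r_ge v Hv). lra. Qed.

Lemma box_Dpow_arg_ge v : vclose 5 rho v c -> rho ^ 4 <= v 0%nat ^ 4 + 16 * v 2%nat ^ 2.
Proof. intros Hv. pose proof (box_r_pow_ge 4 v Hv). pose proof (pow2_ge_0 (v 2%nat)). lra. Qed.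

Lemma box_Dpow_ge v : vclose 5 rho v c -> rho ^ 4 * sqrt (rho ^ 4) <= Dpow (v 0%nat) (v 2%nat).
Proof.
  intros Hv. pose proof (box_Dpow_arg_ge v Hv). pose proof (pow_lt rho 4 rho_pos). unfold Dpow.
  apply Rmult_le_compat; [lra | apply sqrt_pos | lra | apply sqrt_le_1_alt; lra].
Qed.

Lemma box_lipschitz_Dpow : box_lipschitz 5 c rho (fun v => Dpow (v 0%nat) (v 2%nat)).
Proof.
  assert (Harg : box_lipschitz 5 c rho (fun v => v 0%nat ^ 4 + 16 * v 2%nat ^ 2)).
  { apply box_lipschitz_add; [apply box_lipschitz_pow, box_lipschitz_coord; lia |].
    apply box_lipschitz_mul;
      [apply box_lipschitz_const | apply box_lipschitz_pow, box_lipschitz_coord; lia]. }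
  apply (box_lipschitz_mul _ _ _ _ _ Harg).
  exact (box_lipschitz_sqrt _ _ _ _ (rho ^ 4) (pow_lt rho 4 rho_pos) box_Dpow_arg_ge Harg).
Qed.

Lemma heisenberg_field_box_lipschitz k i : (i < 5)%nat ->
  box_lipschitz 5 c rho (fun v => heisenberg_field k v i).
Proof.
  intros Hi.
  assert (Hcoord : forall j, (j < 5)%nat -> box_lipschitz 5 c rho (fun v => v j))
    by (intros; apply box_lipschitz_coord; assumption).
  assert (Hpow : forall j m, (j < 5)%nat -> box_lipschitz 5 c rho (fun v => v j ^ m))
    by (intros; apply box_lipschitz_pow, Hcoord; assumption).
  assert (HDpos : 0 < rho ^ 4 * sqrt (rho ^ 4))
    by (pose proof (pow_lt rho 4 rho_pos); apply Rmult_lt_0_compat; [lra | apply sqrt_lt_R0; lra]).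
  destruct i as [|[|[|[|[|i]]]]]; cbn [heisenberg_field]; try lia.
  - apply Hcoord; lia.
  - apply (box_lipschitz_div _ _ _ _ _ (rho ^ 2));
      [apply pow_lt; lra | apply box_r_pow_ge | apply Hcoord; lia | apply Hpow; lia].
  - apply (box_lipschitz_div _ _ _ _ _ 1);
      [lra | intros; lra | apply Hcoord; lia | apply box_lipschitz_const].
  - apply box_lipschitz_sub.
    + apply (box_lipschitz_div _ _ _ _ _ (rho ^ 3));
        [apply pow_lt; lra | apply box_r_pow_ge | apply Hpow; lia | apply Hpow; lia].
    + apply (box_lipschitz_div _ _ _ _ _ _ HDpos box_Dpow_ge); [| exact box_lipschitz_Dpow].
      apply box_lipschitz_mul; [apply box_lipschitz_const | apply Hpow; lia].
  - apply (box_lipschitz_div _ _ _ _ _ _ HDpos box_Dpow_ge); [| exact box_lipschitz_Dpow].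
    apply box_lipschitz_opp. apply box_lipschitz_mul; [| apply Hcoord; lia].
    apply box_lipschitz_mul; [apply box_lipschitz_const | apply Hpow; lia].
Qed.

End HeisenbergFieldOnBox.

Lemma heisenberg_field_box_proj k c rho v : vclose 5 rho v c ->
  forall i, heisenberg_field k (box_proj c rho v) i = heisenberg_field k v i.
Proof.
  intros Hv i.
  destruct i as [|[|[|[|[|i]]]]]; simpl; rewrite ?(box_proj_id 5 c rho v Hv) by lia; reflexivity.
Qed.

Theorem solution_through_point k r0 th0 z0 pR0 pS0 : 0 < r0 ->
  exists d, 0 < d /\ exists r th z pR pS : R -> R, is_solution k (- d) d r th z pR pS /\
    r 0 = r0 /\ th 0 = th0 /\ z 0 = z0 /\ pR 0 = pR0 /\ pS 0 = pS0.
Proof.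
  intros Hr0.
  set (c := fun j : nat =>
              match j with 0%nat => r0 | 1%nat => th0 | 2%nat => z0 | 3%nat => pR0 | _ => pS0 end).
  set (rho := r0 / 2).
  assert (Hrho : 0 < rho) by (unfold rho; lra).
  (* the radius r0 / 2 keeps the box away from the singular set r = 0 *)
  assert (Hbox_r : forall v, vclose 5 rho v c -> rho <= v 0%nat).
  { intros v Hv. pose proof (Hv 0%nat ltac:(lia)) as X. apply Rabs_le_between in X. unfold rho, c in *. lra. }
  destruct (box_proj_bounded_lipschitz 5 c rho (heisenberg_field k) ltac:(lia) ltac:(lra)
              (heisenberg_field_box_lipschitz c rho Hrho Hbox_r k)) as [M [L [HM [HL [HB HLip]]]]].
  destruct (picard_local_existence 5 _ M L c HM HL HB HLip) as [d1 [Hd1 [y Hy]]].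
  set (d := Rmin d1 (rho / M)).
  assert (Hd : 0 < d) by (apply Rmin_pos; [lra | apply Rdiv_lt_0_compat; lra]).
  assert (Hdd1 : d <= d1) by apply Rmin_l.
  assert (Hdrho : M * d <= rho).
  { apply Rle_trans with (M * (rho / M)); [apply Rmult_le_compat_l; [lra | apply Rmin_r] |].
    right. field. lra. }
  clearbody d.
  (* |y t - c| <= M |t| <= rho: y stays in the box, where clamping is the identity *)
  assert (Hbox : forall t, Rabs t < d -> vclose 5 rho (y t) c).
  { intros t Ht j Hj. destruct (Hy t ltac:(lra) j Hj) as [_ Hb]. nra. }
  assert (Hder : forall t, Rabs t < d -> forall i, (i < 5)%nat ->
            is_derive (fun s => y s i) t (heisenberg_field k (y t) i)).
  { intros t Ht i Hi. rewrite <- (heisenberg_field_box_proj k c rho (y t) (Hbox t Ht)).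
    apply (Hy t ltac:(lra) i Hi). }
  assert (Hinit : forall i, (i < 5)%nat -> y 0 i = c i).
  { intros i Hi. destruct (Hy 0 ltac:(rewrite Rabs_R0; lra) i Hi) as [_ Hb].
    rewrite Rabs_R0, Rmult_0_r in Hb. pose proof (Rabs_pos (y 0 i - c i)).
    assert (Hz : Rabs (y 0 i - c i) = 0) by lra. apply Rabs_eq_0 in Hz. lra. }
  exists d. split; [exact Hd |].
  exists (fun s => y s 0%nat), (fun s => y s 1%nat), (fun s => y s 2%nat),
         (fun s => y s 3%nat), (fun s => y s 4%nat).
  split; [split; [lra |] | rewrite !Hinit by lia; repeat split].
  intros t Ht. assert (Ht' : Rabs t < d) by (apply Rabs_def1; lra).
  split; [pose proof (Hbox_r _ (Hbox t Ht')); lra |].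
  do 4 (split; [apply (Hder t Ht'); lia |]). apply (Hder t Ht'); lia.
Qed.

Definition partial_r (f : R -> R -> R -> R) (r th z : R) : R := Derive (fun u => f u th z) r.
Definition partial_th (f : R -> R -> R -> R) (r th z : R) : R := Derive (fun u => f r u z) th.
Definition partial_z (f : R -> R -> R -> R) (r th z : R) : R := Derive (fun u => f r th u) z.

Definition partial1_continuous_at (K : R -> R -> R -> R) (a b c : R) : Prop :=
  forall eta, 0 < eta -> exists d, 0 < d /\
    forall s b' c', Rabs (s - a) < d -> Rabs (b' - b) < d -> Rabs (c' - c) < d ->
      ex_derive (fun x => K x b' c') s /\
      Rabs (Derive (fun x => K x b' c') s - Derive (fun x => K x b c) a) < eta.

Lemma Rabs_mul_sub_le m D q x eta : eta <= 1 -> Rabs (m - D) < eta -> Rabs (q - x) < eta ->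
  Rabs (m * q - D * x) <= eta * (Rabs x + 1 + Rabs D).
Proof.
  intros He Hm Hq.
  replace (m * q - D * x) with ((m - D) * q + D * (q - x)) by ring.
  eapply Rle_trans; [apply Rabs_triang |]. rewrite !Rabs_mult.
  assert (Rabs q <= Rabs x + 1)
    by (pose proof (Rabs_triang (q - x) x); replace (q - x + x) with q in * by ring; lra).
  assert (Rabs (m - D) * Rabs q <= eta * (Rabs x + 1)) by (apply Rmult_le_compat; try apply Rabs_pos; lra).
  assert (Rabs D * Rabs (q - x) <= Rabs D * eta) by (apply Rmult_le_compat_l; [apply Rabs_pos | lra]).
  lra.
Qed.

(* Caratheodory's characterization of the derivative, relative to u. *)
Lemma is_derive_of_increment (psi u : R -> R) t0 D u' :
  is_derive u t0 u' ->
  (forall eta, 0 < eta -> exists de, 0 < de /\ forall t, Rabs (t - t0) < de ->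
     exists m, psi t - psi t0 = m * (u t - u t0) /\ Rabs (m - D) < eta) ->
  is_derive psi t0 (D * u').
Proof.
  intros Hu Hinc. apply is_derive_Reals. apply is_derive_Reals in Hu.
  intros eps Heps.
  set (C := Rabs u' + 1 + Rabs D).
  assert (HC : 0 < C) by (unfold C; pose proof (Rabs_pos u'); pose proof (Rabs_pos D); lra).
  set (eta := Rmin 1 (eps / (2 * C))).
  assert (Heta : 0 < eta) by (apply Rmin_pos; [lra | apply Rdiv_lt_0_compat; lra]).
  assert (Heta1 : eta <= 1) by apply Rmin_l.
  assert (HetaC : eta * C < eps).
  { apply Rle_lt_trans with (eps / (2 * C) * C); [apply Rmult_le_compat_r; [lra | apply Rmin_r] |].
    replace (eps / (2 * C) * C) with (eps / 2) by (field; lra). lra. }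
  destruct (Hinc eta Heta) as [de [Hde Hm]].
  destruct (Hu eta Heta) as [du Hdu].
  assert (Hdd : 0 < Rmin de du) by (apply Rmin_pos; [lra | apply cond_pos]).
  exists (mkposreal _ Hdd). intros h Hh0 Hh. simpl in Hh.
  pose proof (Rmin_l de du). pose proof (Rmin_r de du).
  destruct (Hm (t0 + h)) as [m [Em Bm]]; [replace (t0 + h - t0) with h by ring; lra |].
  rewrite Em. replace (m * (u (t0 + h) - u t0) / h) with (m * ((u (t0 + h) - u t0) / h))
    by (field; exact Hh0).
  eapply Rle_lt_trans; [apply (Rabs_mul_sub_le _ _ _ _ eta Heta1 Bm), Hdu; [exact Hh0 | lra] |].
  exact HetaC.
Qed.

Lemma segment_dist_lt a b s d : Rabs (b - a) < d -> Rmin a b <= s <= Rmax a b -> Rabs (s - a) < d.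
Proof.
  intros Hb Hs. apply Rabs_lt_between in Hb. apply Rabs_lt_between.
  unfold Rmin, Rmax in Hs. destruct Rle_dec in Hs; lra.
Qed.

Lemma is_derive_partial1_increment (K : R -> R -> R -> R) (u v w : R -> R) t0 u' :
  is_derive u t0 u' -> continuous v t0 -> continuous w t0 ->
  partial1_continuous_at K (u t0) (v t0) (w t0) ->
  is_derive (fun t => K (u t) (v t) (w t) - K (u t0) (v t) (w t)) t0
    (Derive (fun x => K x (v t0) (w t0)) (u t0) * u').
Proof.
  intros Hu Hv Hw HK. apply (is_derive_of_increment _ u _ _ _ Hu).
  intros eta Heta. destruct (HK eta Heta) as [d [Hd HKd]].
  destruct (proj1 (continuous_eps_delta u t0) (is_derive_continuous _ _ _ Hu) d Hd) as [du [Hdu Hu']].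
  destruct (proj1 (continuous_eps_delta v t0) Hv d Hd) as [dv [Hdv Hv']].
  destruct (proj1 (continuous_eps_delta w t0) Hw d Hd) as [dw [Hdw Hw']].
  exists (Rmin du (Rmin dv dw)). split; [repeat apply Rmin_pos; lra |].
  intros t Ht.
  pose proof (Rmin_l du (Rmin dv dw)). pose proof (Rmin_r du (Rmin dv dw)).
  pose proof (Rmin_l dv dw). pose proof (Rmin_r dv dw).
  assert (Hut : Rabs (u t - u t0) < d) by (apply Hu'; lra).
  assert (Hvt : Rabs (v t - v t0) < d) by (apply Hv'; lra).
  assert (Hwt : Rabs (w t - w t0) < d) by (apply Hw'; lra).
  destruct (MVT_gen (fun s => K s (v t) (w t)) (u t0) (u t) (fun s => Derive (fun x => K x (v t) (w t)) s))
    as [xi [Hxi Heq]].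
  - intros s Hs. apply Derive_correct, (HKd s (v t) (w t)); [| exact Hvt | exact Hwt].
    apply (segment_dist_lt _ (u t)); [exact Hut | lra].
  - intros s Hs. apply continuity_pt_filterlim.
    apply (is_derive_continuous (fun x => K x (v t) (w t)) s (Derive (fun x => K x (v t) (w t)) s)).
    apply Derive_correct.
    apply (HKd s (v t) (w t)); [apply (segment_dist_lt _ (u t)); assumption | exact Hvt | exact Hwt].
  - exists (Derive (fun x => K x (v t) (w t)) xi). split.
    + rewrite Rminus_diag, Rminus_0_r. exact Heq.
    + apply (HKd xi (v t) (w t)); [apply (segment_dist_lt _ (u t)); assumption | exact Hvt | exact Hwt].
Qed.

Section C1Functions.

Variable f : R -> R -> R -> R.
Hypothesis f_C1 : Ck 1 f.

Lemma Ck1_continuous r th z : 0 < r -> cont3_at f r th z.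
Proof. apply (proj1 f_C1). Qed.

Lemma Ck1_ex_derive r th z : 0 < r ->
  ex_derive (fun x => f x th z) r /\ ex_derive (fun x => f r x z) th /\ ex_derive (fun x => f r th x) z.
Proof. apply (proj1 (proj2 f_C1)). Qed.

Lemma Ck1_partial_r r th z : 0 < r -> partial1_continuous_at f r th z.
Proof.
  intros Hr eta Heta.
  destruct (proj1 (proj2 (proj2 f_C1)) r th z Hr eta Heta) as [d [Hd Hcont]].
  exists (Rmin d (r / 2)). split; [apply Rmin_pos; lra |].
  intros s b c Hs Hb Hc. pose proof (Rmin_l d (r / 2)). pose proof (Rmin_r d (r / 2)).
  assert (Hspos : 0 < s) by (apply Rabs_lt_between in Hs; lra).
  split; [apply (Ck1_ex_derive s b c Hspos) | apply Hcont; lra].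
Qed.

Lemma Ck1_partial_th r th z : 0 < r -> partial1_continuous_at (fun s b c => f r s c) th th z.
Proof.
  intros Hr eta Heta.
  destruct (proj1 (proj2 (proj2 (proj2 f_C1))) r th z Hr eta Heta) as [d [Hd Hcont]].
  exists d. split; [exact Hd |].
  intros s b c Hs Hb Hc. split; [apply (Ck1_ex_derive r s c Hr) |].
  apply Hcont; [exact Hr | rewrite Rminus_diag, Rabs_R0 | |]; assumption.
Qed.

Lemma chain_rule_Ck1 (x y w : R -> R) t0 x' y' w' :
  is_derive x t0 x' -> is_derive y t0 y' -> is_derive w t0 w' -> 0 < x t0 ->
  is_derive (fun t => f (x t) (y t) (w t)) t0
    (partial_r f (x t0) (y t0) (w t0) * x' + partial_th f (x t0) (y t0) (w t0) * y'
     + partial_z f (x t0) (y t0) (w t0) * w').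
Proof.
  intros Hx Hy Hw Hx0.
  pose proof (is_derive_continuous _ _ _ Hy) as Hyc.
  pose proof (is_derive_continuous _ _ _ Hw) as Hwc.
  apply is_derive_ext with (f := fun t => (f (x t) (y t) (w t) - f (x t0) (y t) (w t))
                               + (f (x t0) (y t) (w t) - f (x t0) (y t0) (w t)) + f (x t0) (y t0) (w t)).
  { intros t. lra. }
  apply (is_derive_plus (V := R_NormedModule)); [apply (is_derive_plus (V := R_NormedModule)) |].
  - exact (is_derive_partial1_increment f x y w t0 x' Hx Hyc Hwc (Ck1_partial_r _ _ _ Hx0)).
  - exact (is_derive_partial1_increment (fun s b c => f (x t0) s c) y y w t0 y' Hy Hyc Hwc
             (Ck1_partial_th _ _ _ Hx0)).
  - rewrite Rmult_comm. apply (is_derive_comp (fun u => f (x t0) (y t0) u) w t0); [| exact Hw].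
    apply Derive_correct, (Ck1_ex_derive _ _ _ Hx0).
Qed.

End C1Functions.

Lemma quadratic2_coeffs_eq0 A B C D E F :
  (forall p s, A * p ^ 2 + B * p * s + C * s ^ 2 + D * p + E * s + F = 0) ->
  A = 0 /\ B = 0 /\ C = 0 /\ D = 0 /\ E = 0 /\ F = 0.
Proof.
  intros H.
  pose proof (H 0 0). pose proof (H 1 0). pose proof (H (-1) 0). pose proof (H 0 1).
  pose proof (H 0 (-1)). pose proof (H 1 1). simpl in *. lra.
Qed.

Lemma biquadratic_pos_eq0 a b c : (forall r, 0 < r -> a + b * r ^ 2 + c * r ^ 4 = 0) -> a = 0.
Proof.
  intros H. pose proof (H 1 ltac:(lra)). pose proof (H 2 ltac:(lra)). pose proof (H 3 ltac:(lra)).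
  simpl in *. lra.
Qed.

Lemma is_derive_of_Derive_eq (phi : R -> R) x l : ex_derive phi x -> Derive phi x = l ->
  is_derive phi x l.
Proof. intros H <-. apply Derive_correct, H. Qed.

Lemma eq_of_is_derive_0 (phi : R -> R) a b :
  (forall x, Rmin a b <= x <= Rmax a b -> is_derive phi x 0) -> phi a = phi b.
Proof.
  intros H. destruct (MVT_gen phi a b (fun _ => 0)) as [c [_ E]].
  - intros x Hx. apply H. lra.
  - intros x Hx. apply continuity_pt_filterlim, (is_derive_continuous phi x 0), H, Hx.
  - lra.
Qed.

Definition lie_derivative k (f g h : R -> R -> R -> R) (r th z p s : R) : R :=
  (partial_r f r th z * p + partial_th f r th z * (s / r ^ 2) + partial_z f r th z * (s / 2)) * p
  + f r th z * (s ^ 2 / r ^ 3 - 2 * k * r ^ 3 / Dpow r z)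
  + ((partial_r g r th z * p + partial_th g r th z * (s / r ^ 2) + partial_z g r th z * (s / 2)) * s
     + g r th z * (- (8 * k * r ^ 2 * z) / Dpow r z))
  + (partial_r h r th z * p + partial_th h r th z * (s / r ^ 2) + partial_z h r th z * (s / 2)).

Lemma first_integral_lie_derivative_eq0 k (f g h : R -> R -> R -> R) :
  Ck 1 f -> Ck 1 g -> Ck 1 h ->
  first_integral k (fun r th z pR pS => f r th z * pR + g r th z * pS + h r th z) ->
  forall r0 th0 z0 p s, 0 < r0 -> lie_derivative k f g h r0 th0 z0 p s = 0.
Proof.
  intros Hf Hg Hh HF r0 th0 z0 p s Hr0.
  destruct (solution_through_point k r0 th0 z0 p s Hr0)
    as [d [Hd [r [th [z [pR [pS [Hsol [E1 [E2 [E3 [E4 E5]]]]]]]]]]]].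
  destruct (proj2 Hsol 0 ltac:(lra)) as [Hr [Dr [Dth [Dz [DpR DpS]]]]].
  set (Phi := fun t => f (r t) (th t) (z t) * pR t + g (r t) (th t) (z t) * pS t + h (r t) (th t) (z t)).
  assert (Hconst : is_derive Phi 0 0).
  { apply is_derive_ext_loc with (f := fun _ => Phi 0);
      [| apply (is_derive_const (K := R_AbsRing) (V := R_NormedModule))].
    exists (mkposreal d Hd). intros t Ht. pose proof (proj1 (ball_Rabs _ _ _) Ht) as Ht'.
    rewrite Rminus_0_r in Ht'. apply Rabs_def2 in Ht'.
    simpl in Ht'. apply (HF _ _ _ _ _ _ _ Hsol); lra. }
  assert (Hchain : is_derive Phi 0 (lie_derivative k f g h (r 0) (th 0) (z 0) (pR 0) (pS 0))).
  { pose proof (chain_rule_Ck1 f Hf r th z 0 _ _ _ Dr Dth Dz Hr) as Cf.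
    pose proof (chain_rule_Ck1 g Hg r th z 0 _ _ _ Dr Dth Dz Hr) as Cg.
    pose proof (chain_rule_Ck1 h Hh r th z 0 _ _ _ Dr Dth Dz Hr) as Ch.
    exact (is_derive_plus _ _ 0 _ _
             (is_derive_plus _ _ 0 _ _ (is_derive_mult _ _ 0 _ _ Cf DpR Rmult_comm)
                                       (is_derive_mult _ _ 0 _ _ Cg DpS Rmult_comm)) Ch). }
  rewrite <- E1, <- E2, <- E3, <- E4, <- E5.
  rewrite <- (is_derive_unique _ _ _ Hchain). exact (is_derive_unique _ _ _ Hconst).
Qed.

(* Coefficients of p_R^2, p_R p_S, p_S^2, p_R, p_S and 1 in the Lie derivative; the last one is
   divided by - 2 k r^2 / (r^4 + 16 z^2)^(3/2). *)
Definition linear_integral_pde (f g h : R -> R -> R -> R) (r th z : R) : Prop :=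
  partial_r f r th z = 0 /\
  partial_th f r th z / r ^ 2 + partial_z f r th z / 2 + partial_r g r th z = 0 /\
  f r th z / r ^ 3 + partial_th g r th z / r ^ 2 + partial_z g r th z / 2 = 0 /\
  partial_r h r th z = 0 /\
  partial_th h r th z / r ^ 2 + partial_z h r th z / 2 = 0 /\
  r * f r th z + 4 * z * g r th z = 0.

Lemma linear_first_integral_pde k (f g h : R -> R -> R -> R) : 0 < k ->
  Ck 1 f -> Ck 1 g -> Ck 1 h ->
  first_integral k (fun r th z pR pS => f r th z * pR + g r th z * pS + h r th z) ->
  forall r th z, 0 < r -> linear_integral_pde f g h r th z.
Proof.
  intros Hk Hf Hg Hh HF r th z Hr.
  pose proof (Dpow_pos r z Hr) as HD.
  assert (Hquad : forall p s,
    partial_r f r th z * p ^ 2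
    + (partial_th f r th z / r ^ 2 + partial_z f r th z / 2 + partial_r g r th z) * p * s
    + (f r th z / r ^ 3 + partial_th g r th z / r ^ 2 + partial_z g r th z / 2) * s ^ 2
    + partial_r h r th z * p + (partial_th h r th z / r ^ 2 + partial_z h r th z / 2) * s
    + (- 2 * k * r ^ 2 / Dpow r z) * (r * f r th z + 4 * z * g r th z) = 0).
  { intros p s. rewrite <- (first_integral_lie_derivative_eq0 k f g h Hf Hg Hh HF r th z p s Hr).
    unfold lie_derivative. field. split; lra. }
  destruct (quadratic2_coeffs_eq0 _ _ _ _ _ _ Hquad) as (A & B & C & D & E & F).
  repeat split; auto.
  assert (0 < 2 * k * r ^ 2 / Dpow r z)
    by (apply Rdiv_lt_0_compat; [pose proof (pow_lt r 2 Hr); nra | exact HD]).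
  apply Rmult_integral in F. destruct F as [F | F]; [| exact F].
  unfold Rdiv in *. lra.
Qed.

Section LinearIntegralPDE.

Variables f g h : R -> R -> R -> R.
Hypothesis f_C1 : Ck 1 f.
Hypothesis g_C1 : Ck 1 g.
Hypothesis h_C1 : Ck 1 h.
Hypothesis pde : forall r th z, 0 < r -> linear_integral_pde f g h r th z.

Lemma f_indep_r r th z : 0 < r -> f r th z = f 1 th z.
Proof.
  intros Hr. apply (eq_of_is_derive_0 (fun u => f u th z)). intros x Hx.
  assert (Hx0 : 0 < x) by (unfold Rmin, Rmax in Hx; destruct Rle_dec in Hx; lra).
  apply is_derive_of_Derive_eq; [apply (Ck1_ex_derive f f_C1 x th z Hx0) | apply (pde x th z Hx0)].
Qed.

Lemma h_indep_r r th z : 0 < r -> h r th z = h 1 th z.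
Proof.
  intros Hr. apply (eq_of_is_derive_0 (fun u => h u th z)). intros x Hx.
  assert (Hx0 : 0 < x) by (unfold Rmin, Rmax in Hx; destruct Rle_dec in Hx; lra).
  apply is_derive_of_Derive_eq; [apply (Ck1_ex_derive h h_C1 x th z Hx0) | apply (pde x th z Hx0)].
Qed.

(* Since h does not depend on r, the equation d_th h / r^2 + d_z h / 2 = 0 at r = 1 and r = 2
   forces both partial derivatives to vanish. *)
Lemma h_const r th z : 0 < r -> h r th z = h 1 0 0.
Proof.
  intros Hr.
  assert (Hpartials : forall th z, partial_th h 1 th z = 0 /\ partial_z h 1 th z = 0).
  { intros th' z'.
    destruct (pde 1 th' z' ltac:(lra)) as (_ & _ & _ & _ & E1 & _).
    destruct (pde 2 th' z' ltac:(lra)) as (_ & _ & _ & _ & E2 & _).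
    unfold partial_th, partial_z in *.
    rewrite (Derive_ext (fun u => h 2 u z') (fun u => h 1 u z')) in E2 by (intros; apply h_indep_r; lra).
    rewrite (Derive_ext (fun u => h 2 th' u) (fun u => h 1 th' u)) in E2 by (intros; apply h_indep_r; lra).
    simpl in E1, E2. split; lra. }
  rewrite (h_indep_r r th z Hr).
  transitivity (h 1 0 z).
  - apply (eq_of_is_derive_0 (fun u => h 1 u z)). intros x _.
    apply is_derive_of_Derive_eq; [apply (Ck1_ex_derive h h_C1 1 x z ltac:(lra)) | apply Hpartials].
  - apply (eq_of_is_derive_0 (fun u => h 1 0 u)). intros x _.
    apply is_derive_of_Derive_eq; [apply (Ck1_ex_derive h h_C1 1 0 x ltac:(lra)) | apply Hpartials].
Qed.

(* For z <> 0, r^3 times the p_S^2 equation is a polynomial in r with constant term f 1 th z. *)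
Lemma f_eq0 r th z : 0 < r -> f r th z = 0.
Proof.
  intros Hr. destruct (Req_dec z 0) as [Hz | Hz].
  { destruct (pde r th z Hr) as (_ & _ & _ & _ & _ & E). subst z. nra. }
  rewrite (f_indep_r r th z Hr).
  destruct (Ck1_ex_derive f f_C1 1 th z ltac:(lra)) as (_ & [ft Hft] & [fz Hfz]).
  assert (Hg : forall r' u w, 0 < r' -> w <> 0 -> g r' u w = - (r' / 4) * (f 1 u w / w)).
  { intros r' u w Hr' Hw. destruct (pde r' u w Hr') as (_ & _ & _ & _ & _ & E).
    rewrite (f_indep_r r' u w Hr') in E. field_simplify_eq; [lra | exact Hw]. }
  apply (biquadratic_pos_eq0 _ (- ft / (4 * z)) (- (fz * z - f 1 th z) / (8 * z ^ 2))).
  intros r' Hr'.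
  destruct (pde r' th z Hr') as (_ & _ & E & _).
  assert (Dth : partial_th g r' th z = - (r' / 4) * ((ft * z - f 1 th z * 0) / z ^ 2)).
  { unfold partial_th. rewrite (Derive_ext _ (fun u => - (r' / 4) * (f 1 u z / z)))
      by (intros; apply Hg; assumption).
    apply is_derive_unique, is_derive_scal.
    apply (is_derive_div _ (fun _ => z) _ _ 0 Hft (is_derive_const z th) Hz). }
  assert (Dz : partial_z g r' th z = - (r' / 4) * ((fz * z - f 1 th z * 1) / z ^ 2)).
  { unfold partial_z. apply is_derive_unique.
    apply is_derive_ext_loc with (f := fun w => - (r' / 4) * (f 1 th w / w)).
    - assert (Hp : 0 < Rabs z) by (apply Rabs_pos_lt, Hz).
      exists (mkposreal _ Hp). intros w Hw. pose proof (proj1 (ball_Rabs _ _ _) Hw) as Hw'.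
      symmetry. apply Hg; [exact Hr' |]. intros ->. rewrite Rminus_0_l, Rabs_Ropp in Hw'. simpl in Hw'. lra.
    - apply is_derive_scal, (is_derive_div _ _ _ _ _ Hfz (is_derive_id z) Hz). }
  rewrite (f_indep_r r' th z Hr'), Dth, Dz in E.
  replace 0 with (r' ^ 3 * 0) by ring. rewrite <- E. field. split; lra.
Qed.

Lemma g_eq0 r th z : 0 < r -> g r th z = 0.
Proof.
  intros Hr.
  assert (Hoff : forall w, w <> 0 -> g r th w = 0).
  { intros w Hw. destruct (pde r th w Hr) as (_ & _ & _ & _ & _ & E).
    rewrite (f_eq0 r th w Hr), Rmult_0_r, Rplus_0_l in E.
    apply Rmult_integral in E. destruct E as [E | E]; [lra | exact E]. }
  destruct (Req_dec z 0) as [-> | Hz]; [| apply Hoff, Hz].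
  destruct (Req_dec (g r th 0) 0) as [E | E]; [exact E | exfalso].
  destruct (Ck1_continuous g g_C1 r th 0 Hr (Rabs (g r th 0)) (Rabs_pos_lt _ E)) as [d [Hd Hcont]].
  specialize (Hcont r th (d / 2) Hr).
  rewrite Hoff, Rminus_0_l, Rabs_Ropp in Hcont by lra.
  rewrite !Rminus_diag, Rminus_0_r, Rabs_R0, (Rabs_right (d / 2)) in Hcont by lra.
  assert (Rabs (g r th 0) < Rabs (g r th 0)) by (apply Hcont; lra). lra.
Qed.

End LinearIntegralPDE.

Theorem proposition3 (k : R) (hk : 0 < k) (f g h : R -> R -> R -> R) :
  smooth3 f -> smooth3 g -> smooth3 h ->
  first_integral k (fun r th z pR pS => f r th z * pR + g r th z * pS + h r th z) ->
  forall r1 th1 z1 pR1 pS1 r2 th2 z2 pR2 pS2 : R, 0 < r1 -> 0 < r2 ->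
    f r1 th1 z1 * pR1 + g r1 th1 z1 * pS1 + h r1 th1 z1 =
    f r2 th2 z2 * pR2 + g r2 th2 z2 * pS2 + h r2 th2 z2.
Proof.
  intros Sf Sg Sh HF r1 th1 z1 pR1 pS1 r2 th2 z2 pR2 pS2 H1 H2.
  pose proof (linear_first_integral_pde k f g h hk (Sf 1%nat) (Sg 1%nat) (Sh 1%nat) HF) as Hpde.
  rewrite !(f_eq0 f g h (Sf 1%nat) Hpde), !(g_eq0 f g h (Sf 1%nat) (Sg 1%nat) Hpde) by assumption.
  rewrite (h_const f g h (Sh 1%nat) Hpde r1 th1 z1 H1), (h_const f g h (Sh 1%nat) Hpde r2 th2 z2 H2).
  ring.
Qed.
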